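(* For every integer $n\ge0$, \[ \sum_{k=0}^n B_{n-k}^{(-k)} = \frac{(-1)^{n+1}}{2}\sum_{j=1}^{n+1}(-1)^j\, j!\, \left\{ {n+1 \atop j} \right\}\frac{\binom{2j}{j}}{3^{j-1}}\sum_{i=0}^{j-1}\frac{3^i}{(2i+1)\binom{2i}{i}}. \]
   Context: $\left\{ {n \atop j} \right\}$ denotes the Stirling number of the second kind. For an integer $k$, $\mathrm{Li}_k(z)=\sum_{m\ge1} z^m/m^k$, and the poly-Bernoulli numbers $B_n^{(k)}\in\mathbb{Q}$ are defined by $\sum_{n\ge0} B_n^{(k)} \frac{t^n}{n!} = \frac{\mathrm{Li}_k(1-e^{-t})}{1-e^{-t}}$. *)

From mathcomp Require Import all_boot all_order all_algebra.
Set Implicit Arguments. Unset Strict Implicit. Unset Printing Implicit Defensive.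
Import Order.TTheory GRing.Theory Num.Theory.
Local Open Scope ring_scope.

Fixpoint stirling2 (n j : nat) : nat :=
  match n, j with
  | 0, 0 => 1
  | 0, _.+1 => 0
  | _.+1, 0 => 0
  | n'.+1, j'.+1 => (j'.+1 * stirling2 n' j'.+1 + stirling2 n' j')%N
  end.

Definition one_minus_exp_neg_trunc (N : nat) : {poly rat} :=
  \sum_(1 <= i < N.+1) ((-1) ^+ i.+1 / (i`!)%:R) *: 'X^i.

(* Coefficient of t^n in the formal power series (1 - e^{-t})^e; since 1-e^{-t}
   has no constant term, it only depends on the truncation at degree n. *)
Definition coef_pow_one_minus_exp_neg (e n : nat) : rat :=
  ((one_minus_exp_neg_trunc n) ^+ e)`_n.

(* Poly-Bernoulli numbers B_n^{(k)}, k : int, defined by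
     sum_n B_n^{(k)} t^n/n! = Li_k(1-e^{-t})/(1-e^{-t})
                            = sum_{m>=1} (1-e^{-t})^(m-1) / m^k.
   Only m <= n+1 contribute to the coefficient of t^n. *)
Definition polyBernoulli (n : nat) (k : int) : rat :=
  (n`!)%:R * \sum_(1 <= m < n.+2)
     (((m%:R : rat) ^ (- k)) * coef_pow_one_minus_exp_neg m.-1 n).

(* Expanding the poly-Bernoulli numbers of negative upper index gives
   B_a^(-k) = sum_j j! s(a,j) (j+1)^k with s(a,j) = (-1)^(a+j) S(a,j).
   After exchanging the sums, the inner sum over a is evaluated by
   sum_a s(a,j) c^(n-a) = sum_(m>j) s(n+1,m) prod_(j<i<m) (c+i), and for c = j+1
   that product is (m+j)!/(2j+1)!.  Exchanging once more leaves s(n+1,m) times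
   D(m) = sum_(j<m) j! (m+j)!/(2j+1)!.  Both D and the closed form on the right
   satisfy X(m+1) = 2/3 (2m+1) X(m) + m!; for D this follows by telescoping
   against G(j) = -2 j! (m+j)!/(2j)!. *)
From mathcomp Require Import all_boot all_order all_algebra.
From mathcomp Require Import ring zify.
Import Order.TTheory GRing.Theory Num.Theory.

Lemma stirling2SS n j :
  stirling2 n.+1 j.+1 = j.+1 * stirling2 n j.+1 + stirling2 n j.
Proof. by []. Qed.

Lemma stirling2_small a j : a < j -> stirling2 a j = 0.
Proof. by elim: a j => [|a IH] [|j] //= lt_aj; rewrite !IH ?muln0 // ltnW. Qed.

Lemma stirling2_binomial a e :
  stirling2 a.+1 e.+1 = \sum_(0 <= b < a.+1) 'C(a, b) * stirling2 b e.
Proof.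
elim: a e => [|a IH] e.
  by rewrite big_nat1 stirling2SS (@stirling2_small 0 e.+1) // muln0 mul1n.
rewrite stirling2SS (big_nat_recl _ _ _ (leq0n a.+1)).
under eq_bigr do rewrite binS mulnDl.
rewrite big_split addnA.
have -> : 'C(a.+1, 0) * stirling2 0 e
          + \sum_(0 <= i < a.+1) 'C(a, i.+1) * stirling2 i.+1 e
        = stirling2 a.+1 e.+1.
  rewrite IH (big_nat_recr _ _ _ (leq0n a)) (bin_small (ltnSn a)) mul0n Monoid.simpm.
  by rewrite [RHS](big_nat_recl _ _ _ (leq0n a)) !bin0.
case: e IH => [|e] IH.
  by rewrite big1 ?addn0 ?mul1n // => i _; rewrite muln0.
rewrite !IH big_distrr -!big_split /=.
by apply: eq_bigr => i _; ring.
Qed.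

Lemma stirling2_binomial_lt a e :
  \sum_(0 <= b < a) 'C(a, b) * stirling2 b e = e.+1 * stirling2 a e.+1.
Proof.
case: a => [|a]; first by rewrite big_geq // (@stirling2_small 0 e.+1) // muln0.
have := stirling2_binomial a.+1 e.
by rewrite big_nat_recr //= binn mul1n; lia.
Qed.

Local Open Scope ring_scope.

Lemma fact_neq0 (R : numDomainType) n : (n`!)%:R != 0 :> R.
Proof. by rewrite pnatr_eq0 -lt0n fact_gt0. Qed.

Lemma coef_one_minus_exp_neg_trunc N k :
  (one_minus_exp_neg_trunc N)`_k =
  if (0 < k <= N)%N then (-1) ^+ k.+1 / (k`!)%:R else 0.
Proof.
rewrite /one_minus_exp_neg_trunc coef_sum.
under eq_bigr do rewrite coefZ coefXn.
case: ifP => [/andP[k_gt0 le_kN] | out_k].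
  rewrite (bigD1_seq k) /= ?mem_index_iota ?iota_uniq ?k_gt0 ?ltnS //.
  rewrite eqxx mulr1 big1 ?addr0 // => i /negbTE.
  by rewrite eq_sym => ->; rewrite mulr0.
rewrite big1_seq // => i; rewrite mem_index_iota => /andP[_ lt_iN].
by case: eqP => [ki | _]; rewrite ?mulr0 //; move: out_k; rewrite ki -ltnS lt_iN.
Qed.

(* Multiplying by one more factor 1 - e^-t is, coefficientwise, the binomial
   recurrence [stirling2_binomial_lt]. *)
Lemma coef_exp_one_minus_exp_neg_trunc N e b : (b <= N)%N ->
  ((one_minus_exp_neg_trunc N) ^+ e)`_b =
  (-1) ^+ (b + e) * (e`!)%:R * (stirling2 b e)%:R / (b`!)%:R.
Proof.
elim: e b => [|e IH] b le_bN.
  rewrite expr0 coef1 addn0 fact0 mulr1.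
  by case: b {le_bN} => [|b] /=; rewrite ?fact0 ?divr1 ?mulr1 ?mulr0 ?mul0r.
rewrite exprSr coefM big_ord_recr /= subnn coef_one_minus_exp_neg_trunc mulr0 addr0.
have -> : (stirling2 b e.+1)%:R = (e.+1 * stirling2 b e.+1)%N%:R / e.+1%:R :> rat.
  by rewrite natrM mulrAC divff ?mul1r // pnatr_eq0.
rewrite -stirling2_binomial_lt natr_sum big_mkord !mulr_suml mulr_sumr mulr_suml.
apply: eq_bigr => j _; have lt_jb := ltn_ord j.
rewrite IH ?(leq_trans (ltnW lt_jb)) // coef_one_minus_exp_neg_trunc subn_gt0.
rewrite lt_jb (leq_trans (leq_subr _ _) le_bN) /=.
have binE : 'C(b, j)%:R = (b`!)%:R / ((j`!)%:R * ((b - j)`!)%:R) :> rat.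
  by rewrite -(bin_fact (ltnW lt_jb)) !natrM mulfK // mulf_neq0 ?fact_neq0.
have signE : (-1) ^+ (j + e) * (-1) ^+ (b - j).+1 = (-1) ^+ (b + e.+1) :> rat.
  by rewrite -exprD; congr (_ ^+ _); lia.
rewrite natrM binE -signE factS natrM.
by field; rewrite !fact_neq0 nat1r pnatr_eq0.
Qed.

Section SignedStirling.

Variable R : comPzRingType.

Definition signed_stirling2 (a j : nat) : R := (-1) ^+ (a + j) * (stirling2 a j)%:R.

Lemma signed_stirling2SS a j :
  signed_stirling2 a.+1 j.+1 = signed_stirling2 a j - j.+1%:R * signed_stirling2 a j.+1.
Proof. by rewrite /signed_stirling2 stirling2SS natrD natrM addSn addnS !exprS; ring. Qed.

Lemma signed_stirling2_small a j : (a < j)%N -> signed_stirling2 a j = 0.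
Proof. by move=> lt_aj; rewrite /signed_stirling2 stirling2_small ?mulr0. Qed.

Definition prod_shift (c : R) (j m : nat) : R := \prod_(j.+1 <= i < m) (c + i%:R).

Lemma prod_shift_id c j : prod_shift c j j.+1 = 1.
Proof. by rewrite /prod_shift big_geq. Qed.

Lemma prod_shiftS c j m : (j < m)%N -> prod_shift c j m.+1 = prod_shift c j m * (c + m%:R).
Proof. by move=> lt_jm; rewrite /prod_shift big_nat_recr. Qed.

(* The finite form of sum_a S(a,j) x^a = x^j / prod_(i<=j) (1 - i x). *)
Lemma sum_signed_stirling2_exp (c : R) j n :
  \sum_(0 <= a < n.+1) signed_stirling2 a j * c ^+ (n - a) =
  \sum_(j.+1 <= m < n.+2) signed_stirling2 n.+1 m * prod_shift c j m.
Proof.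
elim: n => [|n IH].
  rewrite big_nat1 subnn expr0 mulr1; case: j => [|j].
    by rewrite big_nat1 prod_shift_id mulr1 /signed_stirling2 addn0 sqrrN expr1n.
  by rewrite big_geq // signed_stirling2_small.
have [lt_nj | le_jn] := ltnP n.+1 j.
  rewrite [RHS]big_geq; last by lia.
  rewrite big1_seq // => a; rewrite mem_index_iota => /andP[_ lt_a].
  by rewrite signed_stirling2_small ?mul0r //; lia.
rewrite big_nat_recr //= subnn mulr1.
have -> : \sum_(0 <= a < n.+1) signed_stirling2 a j * c ^+ (n.+1 - a)
        = c * \sum_(0 <= a < n.+1) signed_stirling2 a j * c ^+ (n - a).
  rewrite mulr_sumr !big_nat; apply: eq_bigr => a /andP[_ le_an].
  by rewrite subSn // exprS; ring.
rewrite IH big_add1 /=.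
under [RHS]eq_bigr do rewrite signed_stirling2SS mulrBl.
rewrite sumrB (@big_ltn _ _ _ j) ?prod_shift_id ?mulr1; last by lia.
rewrite -addrA [RHS]addrC; congr (_ + _).
have -> : \sum_(j <= i < n.+2)
            i.+1%:R * signed_stirling2 n.+1 i.+1 * prod_shift c j i.+1
        = \sum_(j.+1 <= m < n.+3) m%:R * signed_stirling2 n.+1 m * prod_shift c j m.
  by rewrite big_add1.
rewrite (@big_nat_recr _ _ _ n.+2 j.+1) /=; last by lia.
rewrite signed_stirling2_small // mulr0 mul0r addr0 mulr_sumr -sumrB !big_nat.
by apply: eq_bigr => m /andP[lt_jm _]; rewrite prod_shiftS //; ring.
Qed.

End SignedStirling.

Arguments prod_shift {R}.

Lemma polyBernoulli_neg a k : polyBernoulli a (- (k%:Z)) =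
  \sum_(0 <= j < a.+1) (j`!)%:R * signed_stirling2 rat a j * (j.+1%:R ^+ k).
Proof.
rewrite /polyBernoulli opprK big_add1 /= mulr_sumr.
apply: eq_bigr => j _.
rewrite -exprnP /coef_pow_one_minus_exp_neg coef_exp_one_minus_exp_neg_trunc //.
by rewrite /signed_stirling2; field; rewrite fact_neq0.
Qed.

Lemma sum_triangle (V : nmodType) (G : nat -> nat -> V) N :
  \sum_(0 <= j < N) \sum_(j.+1 <= m < N.+1) G j m =
  \sum_(1 <= m < N.+1) \sum_(0 <= j < m) G j m.
Proof.
elim: N => [|N IH]; first by rewrite !big_geq.
rewrite (@big_nat_recr _ _ _ N.+1 1) // -IH big_nat_recr //= big_nat1.
rewrite big_nat_recr //= [RHS]addrA; congr (_ + _).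
rewrite -big_split !big_nat; apply: eq_bigr => j /andP[_ lt_jN].
by rewrite big_nat_recr // ltnW.
Qed.

Section FactorialRatios.

Variable R : numFieldType.

Lemma prod_shift_fact j m : (j < m)%N ->
  prod_shift (j.+1%:R : R) j m = ((m + j)`!)%:R / ((2 * j + 1)`!)%:R.
Proof.
elim: m => // m IH; rewrite ltnS leq_eqVlt => /predU1P[<- | lt_jm].
  by rewrite prod_shift_id (_ : (j.+1 + j = 2 * j + 1)%N) ?divff ?fact_neq0 //; lia.
rewrite prod_shiftS // IH // -natrD !addSn factS natrM [(j + m)%N]addnC.
ring.
Qed.

Definition fact_ratio (m j : nat) : R :=
  (j`!)%:R * ((m + j)`!)%:R / ((2 * j + 1)`!)%:R.

Definition fact_ratio_sum (m : nat) : R := \sum_(0 <= j < m) fact_ratio m j.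

Definition fact_ratio_antidiff (m j : nat) : R :=
  - 2%:R * (j`!)%:R * ((m + j)`!)%:R / ((2 * j)`!)%:R.

Lemma fact_ratio_antidiffS m j :
  fact_ratio_antidiff m j.+1 - fact_ratio_antidiff m j =
  fact_ratio m j * (3%:R * (m + j).+1%:R - 2%:R * (2 * m + 1)%:R).
Proof.
have factE k : (k.+1`!)%:R = k.+1%:R * (k`!)%:R :> R by rewrite factS natrM.
rewrite /fact_ratio_antidiff /fact_ratio addnS.
rewrite (_ : (2 * j.+1 = (2 * j + 1).+1)%N); last by lia.
rewrite !factE addn1 factE.
by field; rewrite fact_neq0 -natrM nat1r -natrD !pnatr_eq0.
Qed.

Lemma sum_fact_ratio_weighted m :
  3%:R * \sum_(0 <= j < m) fact_ratio m j * (m + j).+1%:R =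
  2%:R * (2 * m + 1)%:R * fact_ratio_sum m.
Proof.
apply/eqP; rewrite -subr_eq0 /fact_ratio_sum !mulr_sumr -sumrB.
rewrite (eq_bigr (fun j => fact_ratio_antidiff m j.+1 - fact_ratio_antidiff m j)); last first.
  by move=> j _; rewrite fact_ratio_antidiffS; ring.
rewrite telescope_sumr // /fact_ratio_antidiff addn0 muln0 fact0.
rewrite (_ : (m + m = 2 * m)%N); last by lia.
by apply/eqP; field; rewrite fact_neq0.
Qed.

Lemma fact_ratio_sumS m :
  fact_ratio_sum m.+1 = 2%:R / 3%:R * (2 * m + 1)%:R * fact_ratio_sum m + (m`!)%:R.
Proof.
rewrite /fact_ratio_sum big_nat_recr //=.
have -> : fact_ratio m.+1 m = (m`!)%:R.
  by rewrite /fact_ratio (_ : (m.+1 + m = 2 * m + 1)%N) ?mulfK ?fact_neq0 //; lia.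
congr (_ + _).
have -> : \sum_(0 <= j < m) fact_ratio m.+1 j
        = \sum_(0 <= j < m) fact_ratio m j * (m + j).+1%:R.
  by apply: eq_bigr => j _; rewrite /fact_ratio addSn factS natrM; ring.
apply: (mulfI (_ : 3%:R != 0 :> R)); first by rewrite pnatr_eq0.
by rewrite sum_fact_ratio_weighted -/(fact_ratio_sum m); field.
Qed.

Definition fact_ratio_closed (m : nat) : R :=
  (m`!)%:R * 'C(2 * m, m)%:R / (3%:R ^+ m.-1)
  * (\sum_(0 <= i < m) 3%:R ^+ i / ((2 * i + 1)%:R * 'C(2 * i, i)%:R)) / 2%:R.

Lemma central_binomialE n :
  'C(2 * n, n)%:R = ((2 * n)`!)%:R / ((n`!)%:R * (n`!)%:R) :> R.
Proof.
have le_n2n : (n <= 2 * n)%N by lia.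
rewrite -(bin_fact le_n2n) (_ : (2 * n - n = n)%N); last by lia.
by rewrite !natrM mulfK // mulf_neq0 ?fact_neq0.
Qed.

Lemma fact_ratio_closedS m :
  fact_ratio_closed m.+1 = 2%:R / 3%:R * (2 * m + 1)%:R * fact_ratio_closed m + (m`!)%:R.
Proof.
case: m => [|k].
  rewrite /fact_ratio_closed big_nat1 big_geq // mulr0 mul0r mulr0 add0r.
  rewrite (_ : 'C(2 * 1, 1) = 2%N) // (_ : 1`! = 1%N) // muln0 add0n bin0 fact0 !expr0.
  by field.
rewrite /fact_ratio_closed /= (big_nat_recr _ _ _ (leq0n k.+1)) /=.
set S := \sum_(0 <= i < k.+1) _.
rewrite !central_binomialE exprS.
have -> : ((2 * k.+2)`!)%:R = 2%:R * k.+2%:R * (2 * k.+1 + 1)%:R * ((2 * k.+1)`!)%:R :> R.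
  rewrite -!natrM (_ : (2 * k.+2 = (2 * k.+1).+2)%N); last by lia.
  by rewrite addn1 !factS !mulnA.
have -> : ((k.+2)`!)%:R = k.+2%:R * ((k.+1)`!)%:R :> R by rewrite -natrM.
have c0 : (2 * k.+1 + 1)%:R != 0 :> R by rewrite pnatr_eq0 addn1.
have d0 : k.+2%:R != 0 :> R by rewrite pnatr_eq0.
have t0 : 3 ^+ k != 0 :> R by rewrite expf_neq0 // pnatr_eq0.
(* Generalizing the nonzero atoms keeps [field] from expanding the casts. *)
move: c0 d0 t0 (fact_neq0 R (2 * k.+1)) (fact_neq0 R k.+1).
move: ((2 * k.+1 + 1)%:R) (k.+2%:R) (3 ^+ k) ((2 * k.+1)`!%:R) ((k.+1)`!%:R).
move=> c d t A B c0 d0 t0 A0 B0.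
by field; apply/and5P.
Qed.

Lemma fact_ratio_sumE m : fact_ratio_sum m = fact_ratio_closed m.
Proof.
elim: m => [|m IH]; last by rewrite fact_ratio_sumS fact_ratio_closedS IH.
by rewrite /fact_ratio_sum /fact_ratio_closed !big_geq // mulr0 mul0r.
Qed.

End FactorialRatios.

Theorem corollary3p6 (n : nat) :
  \sum_(0 <= k < n.+1) polyBernoulli (n - k) (- (k%:Z)) =
  ((-1) ^+ n.+1 / 2%:R) *
  \sum_(1 <= j < n.+2)
     ((-1) ^+ j * (j`!)%:R * (stirling2 n.+1 j)%:R
      * ('C(2 * j, j))%:R / (3%:R ^+ j.-1)
      * \sum_(0 <= i < j)
           ((3%:R : rat) ^+ i / ((2 * i + 1)%:R * ('C(2 * i, i))%:R))).
Proof.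
have expandB a : (0 <= a < n.+1)%N ->
    polyBernoulli (n - (n.+1 - a.+1)) (- (n.+1 - a.+1)%:Z) =
    \sum_(0 <= j < n.+1) (j`!)%:R * (signed_stirling2 rat a j * j.+1%:R ^+ (n - a)).
  move=> /andP[_ lt_an]; rewrite subSS subKn // polyBernoulli_neg.
  rewrite (big_nat_widen _ _ _ _ _ lt_an) big_mkcond; apply: eq_bigr => j _.
  case: ltnP => [_ | le_aj]; rewrite ?mulrA //.
  by rewrite /signed_stirling2 stirling2_small // !(mulr0, mul0r).
have stirling_prod_shift j : (j`!)%:R *
      \sum_(j.+1 <= m < n.+2) signed_stirling2 rat n.+1 m * prod_shift j.+1%:R j m =
    \sum_(j.+1 <= m < n.+2) signed_stirling2 rat n.+1 m * fact_ratio rat m j.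
  rewrite mulr_sumr; apply: eq_big_nat => m /andP[lt_jm _].
  by rewrite prod_shift_fact // /fact_ratio; ring.
rewrite big_nat_rev add0n (eq_big_nat _ _ expandB) exchange_big_nat.
under eq_bigr => j _ do rewrite -mulr_sumr sum_signed_stirling2_exp stirling_prod_shift.
rewrite (@sum_triangle _ (fun j m => signed_stirling2 rat n.+1 m * fact_ratio rat m j)).
under eq_bigr => m _ do rewrite -mulr_sumr -/(fact_ratio_sum rat m) fact_ratio_sumE.
rewrite mulr_sumr; apply: eq_bigr => m _.
rewrite /signed_stirling2 /fact_ratio_closed exprD.
by field; rewrite expf_neq0.
Qed.
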